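(* $\mathrm D(\log a)\cap\ell^2_{\rm fin}=\{0\}$ and $\mathrm D(\log a^* )=\{0\}$. In particular the phase operator $\rho=-\frac i2(\log a-\log a^* )$, defined on $\mathrm D(\log a)\cap \mathrm D(\log a^* )$, has $\mathrm D(\rho)=\{0\}$.
   Context: $\ell^2=\ell^2(\mathbb N)$, $\mathbb N=\{0,1,2,\dots\}$, with orthonormal basis $(\xi_n)$; $\ell^2_{\rm fin}$ is the set of finite linear combinations of the $\xi_n$. The annihilation operator $a$ is the closed operator with $a\xi_n=\sqrt n\,\xi_{n-1}$ ($a\xi_0=0$) and domain $\{\sum c_n\xi_n:\sum n|c_n|^2<\infty\}$; $a^*$ is its adjoint, $a^*\xi_n=\sqrt{n+1}\,\xi_{n+1}$. For a linear operator $A$, $\log A$ is defined by $\mathrm D(\log A)=\{f\in\bigcap_{k\ge0}\mathrm D(A^k):\lim_{K\to\infty}\sum_{k=1}^K\frac1k(\mathbf 1-A)^kf\text{ exists}\}$ and $\log Af=-\sum_{k=1}^\infty\frac1k(\mathbf 1-A)^kf$. *)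

From Stdlib Require Import Reals.
From Coquelicot Require Import Coquelicot.
Open Scope R_scope.

(* Vectors of l^2(N) written in the basis (xi_n): f = sum_n f n xi_n. *)
Definition seqC := nat -> C.

Definition l2 (f : seqC) : Prop := ex_series (fun n => (Cmod (f n)) ^ 2).

(* A (possibly unbounded) linear operator: domain + action on coefficient
   sequences (the action is only meaningful on the domain). *)
Record op := Op { dom : seqC -> Prop ; act : seqC -> seqC }.

(* annihilation operator a: a xi_n = sqrt n xi_(n-1), i.e. (a f)_n = sqrt(n+1) f_(n+1),
   domain {sum c_n xi_n : sum n |c_n|^2 < oo} *)
Definition ann : op :=
  Op (fun f => l2 f /\ ex_series (fun n => INR n * (Cmod (f n)) ^ 2))
     (fun f n => Cmult (RtoC (sqrt (INR (S n)))) (f (S n))).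

(* creation operator a^* (adjoint of a): a^* xi_n = sqrt(n+1) xi_(n+1), i.e.
   (a^* f)_0 = 0, (a^* f)_(m+1) = sqrt(m+1) f_m, on its maximal domain *)
Definition cre_act (f : seqC) (n : nat) : C :=
  match n with
  | O => RtoC 0
  | S m => Cmult (RtoC (sqrt (INR (S m)))) (f m)
  end.

Definition cre : op := Op (fun f => l2 f /\ l2 (cre_act f)) cre_act.

Fixpoint dom_pow (A : op) (k : nat) (f : seqC) : Prop :=
  match k with
  | O => True
  | S k' => dom A f /\ dom_pow A k' (act A f)
  end.

Definition one_minus (A : op) (g : seqC) : seqC := fun n => Cminus (g n) (act A g n).

Fixpoint one_minus_pow (A : op) (k : nat) (f : seqC) : seqC :=
  match k with
  | O => f
  | S k' => one_minus A (one_minus_pow A k' f)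
  end.

Fixpoint log_partial (A : op) (f : seqC) (K : nat) : seqC :=
  match K with
  | O => fun _ => RtoC 0
  | S K' => fun n => Cplus (log_partial A f K' n)
                       (Cmult (RtoC (/ INR (S K'))) (one_minus_pow A (S K') f n))
  end.

Definition l2_lim (u : nat -> seqC) (g : seqC) : Prop :=
  l2 g /\ (forall K, ex_series (fun n => (Cmod (Cminus (u K n) (g n))) ^ 2)) /\
  is_lim_seq (fun K => Series (fun n => (Cmod (Cminus (u K n) (g n))) ^ 2)) 0.

Definition log_dom (A : op) (f : seqC) : Prop :=
  (forall k, dom_pow A k f) /\ exists g, l2_lim (log_partial A f) g.

Definition l2_fin (f : seqC) : Prop := exists N, forall n, (N <= n)%nat -> f n = RtoC 0.

Definition rho_dom (f : seqC) : Prop := log_dom ann f /\ log_dom cre f.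

Definition is_zero (f : seqC) : Prop := forall n, f n = RtoC 0.

From Stdlib Require Import Arith Reals Lra Lia.
From Coquelicot Require Import Coquelicot.
Open Scope R_scope.

(** If every power [(1 - A)^k] leaves the [M]-th coordinate of [f] unchanged,
    then the [M]-th coordinate of the [K]-th partial sum of [log A f] is
    [H_K f_M], with [H_K] the harmonic numbers.  Convergence in [l^2] bounds
    each coordinate, and [H_K] diverges, so [f_M = 0].  Since [a] lowers and
    [a^*] raises indices, this applies to the top coefficient of a finitely
    supported [f] in [D(log a)] and to the bottom coefficient of any [f] in
    [D(log a^* )]; induction kills all coefficients. *)

Lemma is_series_eq0 (b : nat -> R) : (forall n, b n = 0) -> is_series b 0.
Proof.
  intros b0; apply (filterlim_ext (fun _ => 0)); [|apply filterlim_const].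
  intros n; rewrite (sum_n_ext _ (fun _ => 0)), sum_n_const by auto; ring.
Qed.

Lemma Series_ge0 (b : nat -> R) :
  (forall n, 0 <= b n) -> ex_series b -> 0 <= Series b.
Proof.
  intros b_ge0 b_ex.
  rewrite <- (is_series_unique _ _ (is_series_eq0 (fun _ => 0) (fun _ => eq_refl))).
  apply Series_le; auto; intros n; split; [lra | auto].
Qed.

Lemma Series_ge_term (b : nat -> R) (M : nat) :
  (forall n, 0 <= b n) -> ex_series b -> b M <= Series b.
Proof.
  revert b; induction M as [|M IHM]; intros b b_ge0 b_ex;
    rewrite (Series_incr_1 b b_ex);
    assert (tail_ex : ex_series (fun k => b (S k))) by exact (proj1 (ex_series_incr_1 b) b_ex).
  - pose proof (Series_ge0 _ (fun k => b_ge0 (S k)) tail_ex); lra.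
  - pose proof (IHM _ (fun k => b_ge0 (S k)) tail_ex); pose proof (b_ge0 O); lra.
Qed.

Fixpoint harmonic (K : nat) : R :=
  match K with O => 0 | S K' => harmonic K' + / INR (S K') end.

Lemma harmonic_ge0 (K : nat) : 0 <= harmonic K.
Proof.
  induction K; cbn [harmonic]; [lra|].
  assert (0 < / INR (S K)) by (apply Rinv_0_lt_compat, lt_0_INR; lia); lra.
Qed.

(* Each of the terms [1/(K+1), ..., 1/(K+i)] is at least [1/(2K)]. *)
Lemma harmonic_add_ge (K i : nat) :
  (1 <= K)%nat -> (i <= K)%nat -> harmonic K + INR i / (2 * INR K) <= harmonic (K + i).
Proof.
  intros K_ge1; induction i as [|i IHi]; intros i_le.
  - rewrite Nat.add_0_r; simpl; lra.
  - rewrite Nat.add_succ_r; cbn [harmonic]; rewrite S_INR.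
    specialize (IHi ltac:(lia)).
    assert (K_pos : 0 < INR K) by (apply lt_0_INR; lia).
    assert (term_ge : / (2 * INR K) <= / INR (S (K + i))).
    { apply Rinv_le_contravar; [apply lt_0_INR; lia|].
      replace (2 * INR K) with (INR (2 * K)) by (rewrite mult_INR; simpl; ring).
      apply le_INR; lia. }
    unfold Rdiv in *; lra.
Qed.

Lemma harmonic_pow2_ge (j : nat) : INR j / 2 <= harmonic (2 ^ j).
Proof.
  induction j as [|j IHj]; [simpl; lra|].
  assert (pow_ge1 : (1 <= 2 ^ j)%nat)
    by (apply Nat.le_succ_l, Nat.neq_0_lt_0, Nat.pow_nonzero; lia).
  replace (2 ^ S j)%nat with (2 ^ j + 2 ^ j)%nat by (simpl; lia).
  pose proof (harmonic_add_ge _ _ pow_ge1 (le_n _)) as doubling.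
  replace (INR (2 ^ j) / (2 * INR (2 ^ j))) with (/ 2) in doubling
    by (field; apply not_0_INR, Nat.pow_nonzero; lia).
  rewrite S_INR; lra.
Qed.

Lemma harmonic_unbounded (B : R) (N : nat) : exists K, (N <= K)%nat /\ B < harmonic K.
Proof.
  destruct (INR_unbounded B) as [n n_gt].
  set (j := (2 * (n + N))%nat).
  exists (2 ^ j)%nat; split.
  - pose proof (Nat.pow_gt_lin_r 2 j ltac:(lia)); unfold j in *; lia.
  - eapply Rlt_le_trans; [|apply harmonic_pow2_ge].
    unfold j; rewrite mult_INR, plus_INR; simpl (INR 2).
    pose proof (pos_INR N); lra.
Qed.

Lemma l2_lim_coord_bounded (u : nat -> seqC) (g : seqC) (M : nat) :
  l2_lim u g -> exists N, forall K, (N <= K)%nat -> Cmod (u K M) <= 1 + Cmod (g M).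
Proof.
  intros [_ [dist_ex dist_lim]].
  apply is_lim_seq_spec in dist_lim.
  destruct (dist_lim (mkposreal 1 Rlt_0_1)) as [N HN]; cbn [pos] in HN.
  exists N; intros K K_ge.
  specialize (HN K K_ge); rewrite Rminus_0_r in HN; apply Rabs_def2 in HN.
  assert (dist_sq : Cmod (Cminus (u K M) (g M)) ^ 2 <= 1).
  { eapply Rle_trans; [|apply Rlt_le, HN].
    apply (Series_ge_term (fun n => Cmod (Cminus (u K n) (g n)) ^ 2));
      [intros; apply pow2_ge_0 | apply dist_ex]. }
  assert (dist_le : Cmod (Cminus (u K M) (g M)) <= 1)
    by (pose proof (Cmod_ge_0 (Cminus (u K M) (g M))); nra).
  replace (u K M) with (Cplus (Cminus (u K M) (g M)) (g M)) at 1 by ring.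
  eapply Rle_trans; [apply Cmod_triangle | lra].
Qed.

Section FixedCoordinate.

Variables (A : op) (f : seqC) (M : nat).
Hypothesis coord_fixed : forall k, one_minus_pow A k f M = f M.

Lemma log_partial_fixed_coord (K : nat) :
  log_partial A f K M = Cmult (f M) (RtoC (harmonic K)).
Proof.
  induction K as [|K IHK]; cbn [log_partial harmonic].
  - apply injective_projections; simpl; ring.
  - rewrite IHK, coord_fixed, RtoC_plus; ring.
Qed.

Lemma log_fixed_coord_eq0 : (exists g, l2_lim (log_partial A f) g) -> f M = RtoC 0.
Proof.
  intros [g lim_g].
  destruct (Ceq_dec (f M) (RtoC 0)) as [| fM_neq0]; [assumption | exfalso].
  apply Cmod_gt_0 in fM_neq0.
  destruct (l2_lim_coord_bounded _ _ M lim_g) as [N bounded].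
  destruct (harmonic_unbounded ((1 + Cmod (g M)) / Cmod (f M)) N) as [K [K_ge H_gt]].
  specialize (bounded K K_ge).
  rewrite log_partial_fixed_coord, Cmod_mult, Cmod_R, Rabs_pos_eq in bounded
    by apply harmonic_ge0.
  apply (Rmult_lt_compat_r (Cmod (f M))) in H_gt; [|assumption].
  unfold Rdiv in H_gt; rewrite Rmult_assoc, Rinv_l, Rmult_1_r in H_gt by lra.
  lra.
Qed.

End FixedCoordinate.

Definition preserves_zero (A : op) : Prop :=
  forall f, is_zero f -> dom A f /\ is_zero (act A f).

Lemma l2_zero (f : seqC) : is_zero f -> l2 f.
Proof.
  intros f0; exists 0; apply is_series_eq0.
  intros n; rewrite f0, Cmod_0; ring.
Qed.

Lemma log_dom_zero (A : op) (f : seqC) : preserves_zero A -> is_zero f -> log_dom A f.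
Proof.
  intros A0 f0; split.
  - intros k; revert f f0; induction k as [|k IHk]; intros f f0; simpl; [exact I|].
    destruct (A0 f f0); auto.
  - assert (pow0 : forall k, is_zero (one_minus_pow A k f)).
    { induction k as [|k IHk]; [exact f0|]; intros n; cbn [one_minus_pow]; unfold one_minus.
      destruct (A0 _ IHk) as [_ act0]; rewrite IHk, act0; ring. }
    assert (partial0 : forall K, is_zero (log_partial A f K)).
    { induction K as [|K IHK]; intros n; [reflexivity|].
      cbn [log_partial]; rewrite IHK, (pow0 (S K)); ring. }
    assert (dist0 : forall K n, Cmod (Cminus (log_partial A f K n) (RtoC 0)) ^ 2 = 0).
    { intros K n; rewrite partial0; replace (Cminus (RtoC 0) (RtoC 0)) with (RtoC 0) by ring.
      rewrite Cmod_0; ring. }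
    exists (fun _ => RtoC 0); split; [apply l2_zero; intros n; reflexivity | split].
    + intros K; exists 0; apply is_series_eq0, dist0.
    + apply (is_lim_seq_ext (fun _ => 0)); [|apply is_lim_seq_const].
      intros K; symmetry; apply is_series_unique, is_series_eq0, dist0.
Qed.

Lemma ann_preserves_zero : preserves_zero ann.
Proof.
  intros f f0; split; [split; [apply l2_zero, f0|] | intros n; simpl; rewrite f0; ring].
  exists 0; apply is_series_eq0.
  intros n; rewrite f0, Cmod_0; ring.
Qed.

Lemma cre_act_zero (f : seqC) : is_zero f -> is_zero (cre_act f).
Proof. intros f0 [|n]; simpl; [reflexivity|]; rewrite f0; ring. Qed.

Lemma cre_preserves_zero : preserves_zero cre.
Proof.
  intros f f0; split; [split|]; auto using l2_zero, cre_act_zero.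
Qed.

Lemma ann_one_minus_pow_top (f : seqC) (M : nat) :
  (forall n, (M < n)%nat -> f n = RtoC 0) -> forall k,
  one_minus_pow ann k f M = f M /\ forall n, (M < n)%nat -> one_minus_pow ann k f n = RtoC 0.
Proof.
  intros f_top k; induction k as [|k [IH_M IH_above]]; [auto|].
  cbn [one_minus_pow]; unfold one_minus; simpl; split.
  - rewrite IH_M, IH_above by lia; ring.
  - intros n n_gt; rewrite !IH_above by lia; ring.
Qed.

Lemma cre_one_minus_pow_bottom (f : seqC) (M : nat) :
  (forall n, (n < M)%nat -> f n = RtoC 0) -> forall k,
  one_minus_pow cre k f M = f M /\ forall n, (n < M)%nat -> one_minus_pow cre k f n = RtoC 0.
Proof.
  intros f_bot k; induction k as [|k [IH_M IH_below]]; [auto|].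
  cbn [one_minus_pow]; unfold one_minus; simpl; split.
  - destruct M as [|m]; simpl; rewrite IH_M; [|rewrite IH_below by lia]; ring.
  - intros [|m] n_lt; simpl; rewrite IH_below by lia; [ring|].
    rewrite IH_below by lia; ring.
Qed.

Lemma log_dom_ann_fin_zero (f : seqC) : log_dom ann f -> l2_fin f -> is_zero f.
Proof.
  intros [_ log_conv] [N f_fin].
  assert (zero_above : forall d n, (N - d <= n)%nat -> f n = RtoC 0).
  { induction d as [|d IHd]; intros n n_ge; [apply f_fin; lia|].
    destruct (Nat.le_gt_cases (N - d) n); [auto|].
    apply (log_fixed_coord_eq0 ann f n); [|assumption].
    intros k; apply ann_one_minus_pow_top; intros; apply IHd; lia. }
  intros n; apply (zero_above N); lia.
Qed.

Lemma log_dom_cre_zero (f : seqC) : log_dom cre f -> is_zero f.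
Proof.
  intros [_ log_conv] n; induction n as [n IH] using lt_wf_ind.
  apply (log_fixed_coord_eq0 cre f n); [|assumption].
  intros k; apply (cre_one_minus_pow_bottom f n IH k).
Qed.

Theorem mainTheorem3 :
  (forall f : seqC, (log_dom ann f /\ l2_fin f) <-> is_zero f) /\
  (forall f : seqC, log_dom cre f <-> is_zero f) /\
  (forall f : seqC, rho_dom f <-> is_zero f).
Proof.
  split; [|split]; intros f; split.
  - intros [f_ann f_fin]; exact (log_dom_ann_fin_zero f f_ann f_fin).
  - intros f0; split; [exact (log_dom_zero ann f ann_preserves_zero f0)|].
    exists O; intros n _; apply f0.
  - apply log_dom_cre_zero.
  - apply log_dom_zero, cre_preserves_zero.
  - intros [_ f_cre]; exact (log_dom_cre_zero f f_cre).
  - intros f0; split; apply log_dom_zero; auto using ann_preserves_zero, cre_preserves_zero.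
Qed.
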